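(* Let $\mathbf C$ be a category of coframes and $(L,\nu_L)$ an adherence $\mathbf C$-object. (1) The quasi-closed elements of $L$ form a subcoframe of $L$ (closed under finite suprema and arbitrary infima). (2) The closed elements of $L$ form a sublattice of $L$ (closed under finite suprema and finite infima).
   Context: A category of coframes has coframes as objects and coframe morphisms. $\mathcal C_L$ is the set of complemented elements of $L$. An adherence $\mathbf C$-object is a $\mathbf C$-object $L$ with a monotone map $\nu_L:L\to L$ that preserves finite suprema of complemented elements and satisfies $\nu_L(\ell)=\bigwedge\{\nu_L(a):a\in\mathcal C_L,\ a\ge\ell\}$ for every $\ell\in L$. An element $c$ is quasi-closed if $\nu_L(c)\le c$, and closed if it is complemented and quasi-closed. *)

Record coframe := Coframe {
  car :> Type;
  le : car -> car -> Prop;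
  le_refl : forall x, le x x;
  le_antisym : forall x y, le x y -> le y x -> x = y;
  le_trans : forall x y z, le x y -> le y z -> le x z;
  sup : (car -> Prop) -> car;
  sup_ub : forall S x, S x -> le x (sup S);
  sup_least : forall S u, (forall x, S x -> le x u) -> le (sup S) u;
  inf : (car -> Prop) -> car;
  inf_lb : forall S x, S x -> le (inf S) x;
  inf_greatest : forall S l, (forall x, S x -> le l x) -> le l (inf S);
  join_inf_distr : forall (a : car) (S : car -> Prop),
    sup (fun x => x = a \/ x = inf S) =
    inf (fun y => exists s, S s /\ y = sup (fun x => x = a \/ x = s))
}.

Arguments le {L} : rename.
Arguments sup {L} : rename.
Arguments inf {L} : rename.

Section Ops.
Variable L : coframe.
Definition bot : L := sup (fun _ => False).
Definition top : L := inf (fun _ => False).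
Definition join (a b : L) : L := sup (fun x => x = a \/ x = b).
Definition meet (a b : L) : L := inf (fun x => x = a \/ x = b).

Definition complemented (a : L) : Prop :=
  exists b : L, meet a b = bot /\ join a b = top.

Definition is_adherence (nu : L -> L) : Prop :=
  (forall x y, le x y -> le (nu x) (nu y)) /\
  nu bot = bot /\
  (forall a b, complemented a -> complemented b -> nu (join a b) = join (nu a) (nu b)) /\
  (forall l, nu l = inf (fun y => exists a, complemented a /\ le l a /\ y = nu a)).

Definition quasi_closed (nu : L -> L) (c : L) : Prop := le (nu c) c.
Definition closed_el (nu : L -> L) (c : L) : Prop :=
  complemented c /\ quasi_closed nu c.

Definition is_subcoframe (P : L -> Prop) : Prop :=
  P bot /\ (forall a b, P a -> P b -> P (join a b)) /\
  (forall S : L -> Prop, (forall s, S s -> P s) -> P (inf S)).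

Definition is_sublattice (P : L -> Prop) : Prop :=
  P bot /\ P top /\ (forall a b, P a -> P b -> P (join a b)) /\
  (forall a b, P a -> P b -> P (meet a b)).
End Ops.
Arguments bot {L}. Arguments top {L}. Arguments join {L}. Arguments meet {L}.

(** The adherence is subadditive on all of [L]: by the infimum formula,
    [nu a ∨ nu b] is an infimum of [nu c ∨ nu d = nu (c ∨ d)] over complemented
    [c ≥ a], [d ≥ b] (binary joins distribute over infima in a coframe), and
    each of these dominates [nu (a ∨ b)] by monotonicity.  Hence quasi-closed
    elements are closed under finite joins; closure under infima is plain
    monotonicity.  Complemented elements of a distributive lattice form a
    bounded sublattice, which gives the statement for closed elements. *)


Section CoframeLattice.
Context {L : coframe}.
Implicit Types a b c d x y z : L.

Lemma le_join_l a b : le a (join a b).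
Proof. apply sup_ub; auto. Qed.

Lemma le_join_r a b : le b (join a b).
Proof. apply sup_ub; auto. Qed.

Lemma join_least a b u : le a u -> le b u -> le (join a b) u.
Proof. intros; apply sup_least; intros x [-> | ->]; auto. Qed.

Lemma le_meet_l a b : le (meet a b) a.
Proof. apply inf_lb; auto. Qed.

Lemma le_meet_r a b : le (meet a b) b.
Proof. apply inf_lb; auto. Qed.

Lemma meet_greatest a b l : le l a -> le l b -> le l (meet a b).
Proof. intros; apply inf_greatest; intros x [-> | ->]; auto. Qed.

Lemma bot_le x : le bot x.
Proof. apply sup_least; tauto. Qed.

Lemma le_top x : le x top.
Proof. apply inf_greatest; tauto. Qed.

Lemma join_le_compat a b c d : le a c -> le b d -> le (join a b) (join c d).
Proof.
  intros Hac Hbd; apply join_least.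
  - apply le_trans with c; [exact Hac | apply le_join_l].
  - apply le_trans with d; [exact Hbd | apply le_join_r].
Qed.

Lemma meet_le_compat a b c d : le a c -> le b d -> le (meet a b) (meet c d).
Proof.
  intros Hac Hbd; apply meet_greatest.
  - apply le_trans with a; [apply le_meet_l | exact Hac].
  - apply le_trans with b; [apply le_meet_r | exact Hbd].
Qed.

Lemma joinC a b : join a b = join b a.
Proof. apply le_antisym; apply join_least; apply le_join_r || apply le_join_l. Qed.

Lemma meetC a b : meet a b = meet b a.
Proof. apply le_antisym; apply meet_greatest; apply le_meet_r || apply le_meet_l. Qed.

Lemma le_join_inf x a (S : L -> Prop) :
  (forall s, S s -> le x (join a s)) -> le x (join a (inf S)).
Proof.
  intros H; unfold join; rewrite join_inf_distr.
  apply inf_greatest; intros y [s [Hs ->]]; apply H, Hs.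
Qed.

Lemma join_meet_distr a b c : join a (meet b c) = meet (join a b) (join a c).
Proof.
  apply le_antisym.
  - apply meet_greatest; apply join_le_compat;
      apply le_refl || apply le_meet_l || apply le_meet_r.
  - apply le_join_inf; intros s [-> | ->]; [apply le_meet_l | apply le_meet_r].
Qed.

Lemma meet_join_distr_le x y z :
  le (meet x (join y z)) (join (meet x y) (meet x z)).
Proof.
  rewrite join_meet_distr; apply meet_greatest.
  - apply le_trans with x; [apply le_meet_l | apply le_join_r].
  - rewrite (joinC (meet x y) z), join_meet_distr; apply meet_greatest.
    + apply le_trans with x; [apply le_meet_l | apply le_join_r].
    + rewrite (joinC z); apply le_meet_r.
Qed.

Lemma complementedP a :
  complemented L a <-> exists b, le (meet a b) bot /\ le top (join a b).
Proof.
  split; intros [b [Hm Hj]]; exists b.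
  - rewrite Hm, Hj; split; apply le_refl.
  - split; apply le_antisym; auto using bot_le, le_top.
Qed.

Lemma complemented_bot : complemented L bot.
Proof. apply complementedP; exists top; split; [apply le_meet_l | apply le_join_r]. Qed.

Lemma complemented_top : complemented L top.
Proof. apply complementedP; exists bot; split; [apply le_meet_r | apply le_join_l]. Qed.

Lemma complemented_join c d :
  complemented L c -> complemented L d -> complemented L (join c d).
Proof.
  intros [c' [Hc0 Hc1]] [d' [Hd0 Hd1]]; apply complementedP.
  exists (meet c' d'); split.
  - rewrite meetC; apply le_trans with (join (meet c' c) (meet d' d)).
    + apply le_trans with (join (meet (meet c' d') c) (meet (meet c' d') d));
        [apply meet_join_distr_le|].
      apply join_le_compat; apply meet_le_compat;
        apply le_meet_l || apply le_meet_r || apply le_refl.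
    + rewrite (meetC c'), (meetC d'), Hc0, Hd0; apply join_least; apply le_refl.
  - rewrite join_meet_distr; apply meet_greatest.
    + rewrite <- Hc1; apply join_le_compat; [apply le_join_l | apply le_refl].
    + rewrite <- Hd1; apply join_le_compat; [apply le_join_r | apply le_refl].
Qed.

Lemma complemented_meet c d :
  complemented L c -> complemented L d -> complemented L (meet c d).
Proof.
  intros [c' [Hc0 Hc1]] [d' [Hd0 Hd1]]; apply complementedP.
  exists (join c' d'); split.
  - apply le_trans with (join (meet c c') (meet d d')).
    + apply le_trans with (join (meet (meet c d) c') (meet (meet c d) d'));
        [apply meet_join_distr_le|].
      apply join_le_compat; apply meet_le_compat;
        apply le_meet_l || apply le_meet_r || apply le_refl.
    + rewrite Hc0, Hd0; apply join_least; apply le_refl.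
  - rewrite joinC, join_meet_distr; apply meet_greatest.
    + rewrite <- Hc1, (joinC c); apply join_le_compat; [apply le_join_l | apply le_refl].
    + rewrite <- Hd1, (joinC d); apply join_le_compat; [apply le_join_r | apply le_refl].
Qed.

End CoframeLattice.

Section Adherence.
Variable L : coframe.
Implicit Types a b : L.
Variable nu : L -> L.
Hypothesis Hnu : is_adherence L nu.

Lemma adherence_mono a b : le a b -> le (nu a) (nu b).
Proof. apply Hnu. Qed.

Lemma adherence_bot : nu bot = bot.
Proof. apply Hnu. Qed.

Lemma adherence_join_complemented a b :
  complemented L a -> complemented L b -> nu (join a b) = join (nu a) (nu b).
Proof. apply Hnu. Qed.

Lemma adherence_inf a :
  nu a = inf (fun y => exists c, complemented L c /\ le a c /\ y = nu c).
Proof. apply Hnu. Qed.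

Lemma adherence_join_le a b : le (nu (join a b)) (join (nu a) (nu b)).
Proof.
  rewrite (adherence_inf a), (joinC _ (nu b)); apply le_join_inf.
  intros y [c [Hc [Hac ->]]].
  rewrite (adherence_inf b), (joinC _ (nu c)); apply le_join_inf.
  intros y [d [Hd [Hbd ->]]].
  rewrite <- adherence_join_complemented by assumption.
  apply adherence_mono, join_le_compat; assumption.
Qed.

Lemma quasi_closed_bot : quasi_closed L nu bot.
Proof. unfold quasi_closed; rewrite adherence_bot; apply le_refl. Qed.

Lemma quasi_closed_join a b :
  quasi_closed L nu a -> quasi_closed L nu b -> quasi_closed L nu (join a b).
Proof.
  unfold quasi_closed; intros Ha Hb.
  apply le_trans with (join (nu a) (nu b));
    [apply adherence_join_le | apply join_le_compat; assumption].
Qed.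

Lemma quasi_closed_inf (S : L -> Prop) :
  (forall s, S s -> quasi_closed L nu s) -> quasi_closed L nu (inf S).
Proof.
  unfold quasi_closed; intros HS; apply inf_greatest; intros s Hs.
  apply le_trans with (nu s); [apply adherence_mono, inf_lb, Hs | apply HS, Hs].
Qed.

Lemma quasi_closed_subcoframe : is_subcoframe L (quasi_closed L nu).
Proof.
  split; [|split].
  - apply quasi_closed_bot.
  - apply quasi_closed_join.
  - apply quasi_closed_inf.
Qed.

Lemma closed_sublattice : is_sublattice L (closed_el L nu).
Proof.
  split; [|split; [|split]].
  - split; [apply complemented_bot | apply quasi_closed_bot].
  - split; [apply complemented_top | apply le_top].
  - intros a b [Ca Qa] [Cb Qb].
    split; [apply complemented_join | apply quasi_closed_join]; assumption.
  - intros a b [Ca Qa] [Cb Qb].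
    split; [apply complemented_meet; assumption|].
    apply quasi_closed_inf; intros s [-> | ->]; assumption.
Qed.

End Adherence.

Theorem mainTheorem20 (L : coframe) (nu : L -> L) (Hnu : is_adherence L nu) :
  is_subcoframe L (quasi_closed L nu) /\ is_sublattice L (closed_el L nu).
Proof.
  split; [apply quasi_closed_subcoframe | apply closed_sublattice]; exact Hnu.
Qed.
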